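(* Let $d,k\geq 2$ and $\epsilon\geq 1$, and let $G$ be a diregular $(d,k,+\epsilon)$-digraph. Then for every vertex $u$ of $G$, the multisets $O(N^+(u))$ and $N^+(O(u))$ are equal.
   Context: A digraph is $k$-geodetic if for every ordered pair of vertices $x,y$ there is at most one directed path from $x$ to $y$ of length at most $k$ (the trivial path of length $0$ counts). $M(d,k)=1+d+\dots+d^k$. A diregular $(d,k,+\epsilon)$-digraph is a $k$-geodetic digraph of order $M(d,k)+\epsilon$ in which every vertex has in-degree and out-degree exactly $d$. $N^+(x)$ is the set of out-neighbours of $x$; $d(x,y)$ is the directed distance; the outlier set of $x$ is $O(x)=\{y: d(x,y)\geq k+1\}$ (it has exactly $\epsilon$ elements). For a set $S$ of vertices, $N^+(S)$ denotes the multiset union $\biguplus_{x\in S}N^+(x)$ and $O(S)$ denotes the multiset union $\biguplus_{x\in S}O(x)$. *)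

From mathcomp Require Import all_boot.
Set Implicit Arguments. Unset Strict Implicit. Unset Printing Implicit Defensive.

(* A directed walk from x of length size p is a sequence p with path e x p;
   it ends at last x p.  The empty sequence is the trivial walk of length 0. *)

Definition k_geodetic (V : finType) (e : rel V) (k : nat) : Prop :=
  forall (x y : V) (p q : seq V),
    path e x p -> path e x q -> last x p = y -> last x q = y ->
    size p <= k -> size q <= k -> p = q.

Definition Moore (d k : nat) : nat := \sum_(i < k.+1) d ^ i.

Definition outN (V : finType) (e : rel V) (x : V) : {set V} := [set y | e x y].
Definition inN (V : finType) (e : rel V) (x : V) : {set V} := [set y | e y x].

Definition within (V : finType) (e : rel V) (k : nat) (x y : V) : bool :=
  [exists n : 'I_k.+1, exists t : n.-tuple V, path e x t && (last x t == y)].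

Definition outlier (V : finType) (e : rel V) (k : nat) (x : V) : {set V} :=
  [set y | ~~ within e k x y].

Definition diregular_dk_eps (V : finType) (e : rel V) (d k eps : nat) : Prop :=
  [/\ k_geodetic e k,
      #|V| = Moore d k + eps &
      forall x : V, #|outN e x| = d /\ #|inN e x| = d].

(** The multiplicity of y on the left counts the x in N^+(u) with d(x,y) > k,
    i.e. it is d - #|{x in N^+(u) | d(x,y) <= k}|; on the right it counts the
    z in N^-(y) with d(u,z) > k, i.e. it is d - #|{z in N^-(y) | d(u,z) <= k}|.
    The two subtracted sets are in bijection: x and z correspond when there is
    a walk u -> x -> ... -> z -> y of length at most k+1, and k-geodecity makes
    this walk unique given either x (its part from x to y has length at most k)
    or z (its part from u to z has length at most k). *)
From mathcomp Require Import all_boot.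
Set Implicit Arguments. Unset Strict Implicit. Unset Printing Implicit Defensive.

Lemma sum_nat_in_card (T : finType) (A : {set T}) (b : pred T) :
  \sum_(x in A) (b x : nat) = #|A :&: [set x | b x]|.
Proof. by rewrite -big_mkcondr sum1dep_card setIdE. Qed.

Lemma leq_card_rel (T : finType) (A B : {set T}) (R : T -> T -> Prop) :
  (forall x, x \in A -> exists2 z, z \in B & R x z) ->
  (forall x x' z, x \in A -> x' \in A -> R x z -> R x' z -> x = x') ->
  #|A| <= #|B|.
Proof.
move=> R_total R_inj.
have /fin_all_exists [f f_spec] : forall x, exists z, x \in A -> z \in B /\ R x z.
  move=> x; have [xA|] := boolP (x \in A); last by exists x.
  by have [z zB Rxz] := R_total x xA; exists z.
rewrite -(@card_in_imset _ _ f A); last first.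
  move=> x x' xA x'A fxx'; apply: (R_inj x x' (f x)) => //.
    by case: (f_spec x xA).
  by rewrite fxx'; case: (f_spec x' x'A).
by apply/subset_leq_card/subsetP => _ /imsetP [x xA ->]; case: (f_spec x xA).
Qed.

Lemma rcons_head_behead (T : Type) (q : seq T) y :
  rcons q y = head y q :: behead (rcons q y).
Proof. by case: q. Qed.

Section Bridges.
Variables (V : finType) (e : rel V) (k : nat).

Lemma withinP x y :
  reflect (exists p, [/\ path e x p, last x p = y & size p <= k]) (within e k x y).
Proof.
apply: (iffP existsP) => [[n /existsP [t /andP [t_path /eqP t_last]]]|].
  by exists (val t); rewrite size_tuple -ltnS ltn_ord.
case=> p [p_path p_last p_size]; exists (Ordinal (p_size : size p < k.+1)).
by apply/existsP; exists (in_tuple p); rewrite p_path p_last eqxx.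
Qed.

Variables u y : V.

(* [q] is the interior of a walk from [u] to [y] of length at most [k+1]; its
   second vertex is [head y q] and its penultimate vertex is [last u q]. *)
Definition bridge (q : seq V) : bool := path e u (rcons q y) && (size q <= k).

Lemma bridge_headE q :
  path e u (rcons q y) =
  e u (head y q) && path e (head y q) (behead (rcons q y)).
Proof. by case: q. Qed.

Lemma last_behead_bridge q : last (head y q) (behead (rcons q y)) = y.
Proof. by case: q => //= x q; rewrite last_rcons. Qed.

Lemma size_behead_bridge q : size (behead (rcons q y)) = size q.
Proof. by rewrite size_behead size_rcons. Qed.

Lemma bridge_head q :
  bridge q -> e u (head y q) && within e k (head y q) y.
Proof.
case/andP; rewrite bridge_headE => /andP [-> tail_path] q_size.
by apply/withinP; exists (behead (rcons q y));
  rewrite last_behead_bridge size_behead_bridge.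
Qed.

Lemma bridge_last q : bridge q -> e (last u q) y && within e k u (last u q).
Proof.
rewrite /bridge rcons_path => /andP [/andP [q_path ->] q_size].
by apply/withinP; exists q.
Qed.

Lemma within_bridge_head x :
  e u x -> within e k x y -> exists2 q, bridge q & head y q = x.
Proof.
move=> eux /withinP [p [p_path p_last p_size]].
have rcons_belast : rcons (belast x p) y = x :: p by rewrite -p_last -lastI.
exists (belast x p); first by rewrite /bridge rcons_belast /= eux p_path size_belast.
by case: p {p_path p_size rcons_belast} p_last => [|a p] //= ->.
Qed.

Lemma within_bridge_last z :
  e z y -> within e k u z -> exists2 q, bridge q & last u q = z.
Proof.
move=> ezy /withinP [q [q_path q_last q_size]].
by exists q => //; rewrite /bridge rcons_path q_path q_last ezy.
Qed.

Hypothesis geo : k_geodetic e k.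

Lemma bridge_inj_head q q' :
  bridge q -> bridge q' -> head y q = head y q' -> q = q'.
Proof.
rewrite /bridge !bridge_headE => /andP [/andP [_ tail]] size_q.
move=> /andP [/andP [_ tail']] size_q' eq_head.
apply: (@rcons_injl _ y); rewrite rcons_head_behead [RHS]rcons_head_behead.
rewrite eq_head in tail *; congr (_ :: _).
apply: (geo (y := y) tail tail'); rewrite ?size_behead_bridge //.
- by rewrite -[in LHS]eq_head last_behead_bridge.
- exact: last_behead_bridge.
Qed.

Lemma bridge_inj_last q q' :
  bridge q -> bridge q' -> last u q = last u q' -> q = q'.
Proof.
rewrite /bridge !rcons_path => /andP [/andP [q_path _] size_q].
move=> /andP [/andP [q'_path _] size_q'] eq_last.
exact: (geo q_path q'_path eq_last).
Qed.

Lemma card_outN_within :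
  #|outN e u :&: [set x | within e k x y]| =
  #|inN e y :&: [set z | within e k u z]|.
Proof.
pose R x z := exists2 q, bridge q & head y q = x /\ last u q = z.
apply/eqP; rewrite eqn_leq; apply/andP; split.
- apply: (@leq_card_rel _ _ _ R).
    move=> x; rewrite !inE => /andP [eux /(within_bridge_head eux) [q bq hq]].
    by exists (last u q); [rewrite !inE; exact: bridge_last | exists q].
  move=> x x' z _ _ [q bq [<- lq]] [q' bq' [<- lq']].
  by rewrite (bridge_inj_last bq bq'); last by rewrite lq lq'.
- apply: (@leq_card_rel _ _ _ (fun z x => R x z)).
    move=> z; rewrite !inE => /andP [ezy /(within_bridge_last ezy) [q bq lq]].
    by exists (head y q); [rewrite !inE; exact: bridge_head | exists q].
  move=> z z' x _ _ [q bq [hq <-]] [q' bq' [hq' <-]].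
  by rewrite (bridge_inj_head bq bq'); last by rewrite hq hq'.
Qed.

End Bridges.

Theorem lemma1 (V : finType) (e : rel V) (d k eps : nat) :
  2 <= d -> 2 <= k -> 1 <= eps ->
  diregular_dk_eps e d k eps ->
  forall u y : V,
    \sum_(x in outN e u) (y \in outlier e k x : nat)
    = \sum_(x in outlier e k u) (y \in outN e x : nat).
Proof.
move=> _ _ _ [geo _ deg] u y.
have -> : \sum_(x in outlier e k u) (y \in outN e x : nat) =
          \sum_(x in inN e y) (x \in outlier e k u : nat).
  by rewrite !sum_nat_in_card setIC; apply: eq_card => x; rewrite !inE.
rewrite !sum_nat_in_card.
have -> : outN e u :&: [set x | y \in outlier e k x] =
          outN e u :\: [set x | within e k x y].
  by apply/setP => x; rewrite !inE andbC.
have -> : inN e y :&: [set x | x \in outlier e k u] =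
          inN e y :\: [set z | within e k u z].
  by apply/setP => x; rewrite !inE andbC.
by rewrite !cardsD (card_outN_within u y geo) (proj1 (deg u)) (proj2 (deg y)).
Qed.
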